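(* Let $n\ge3$, $\boldsymbol\ell$ positive lengths, $\mu,\tau^*\in\mathbb{R}$, and $\xi$, $N>0$ smooth functions on $T^n$ depending only on $s^1$, with $\int_{T^n}\xi N\,dV_{\boldsymbol\ell}=0$. Consider the CTS-H$^*$ conformal data set $(g_{\boldsymbol\ell},\mu\sigma^\flat_{\boldsymbol\ell},\tau^*,\xi,N)$. (1) If $\mu$ and $\tau^*$ are nonzero and have the same sign, there is a solution $(\phi,W)$ of the CTS-H$^*$ equations with $\phi\equiv c=(\mu/\tau^* )^{1/q}$, where $W$ is parallel to $\partial_{s^1}$ and $\frac1{2N}\mathcal{L}_{g_{\boldsymbol\ell}}W=c^{-q}\xi\,\sigma^\flat_{\boldsymbol\ell}$. The generated solution of the constraint equations is $$\bar g=g_{r\boldsymbol\ell},\qquad \bar K=\bar\tau\,(r\ell_1)^2(ds^1)^2,\qquad \bar\tau=\tau^*+c^{-2q}\xi,\qquad r=c^{(q-2)/2}=(\mu/\tau^* )^{1/n}.$$ (2) If $\mu=\tau^*=0$, then for every $c>0$ there is a solution $(\phi,W)$ of the CTS-H$^*$ equations with $\phi\equiv c$ and $\frac1{2N}\mathcal{L}_{g_{\boldsymbol\ell}}W=c^{-q}\xi\,\sigma^\flat_{\boldsymbol\ell}$, and the associated solution of the constraint equations is $\bar g=g_{r\boldsymbol\ell}$, $\bar K=\bar\tau\,(r\ell_1)^2(ds^1)^2$ with $\bar\tau=c^{-2q}\xi$ and $r=c^{(q-2)/2}$.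
   Context: $q=\frac{2n}{n-2}$, $\kappa=\frac{n-1}{n}$. $T^n=(\mathbb{R}/\mathbb{Z})^n$ with unit coordinates $(s^1,\ldots,s^n)$; $g_{\boldsymbol\ell}=\sum_k\ell_k^2(ds^k)^2$ with volume form $dV_{\boldsymbol\ell}$; $r\boldsymbol\ell=(r\ell_1,\ldots,r\ell_n)$; $\sigma^\flat_{\boldsymbol\ell}=\kappa\ell_1^2(ds^1)^2-\frac1n\sum_{k\ge2}\ell_k^2(ds^k)^2$ (transverse-traceless for $g_{\boldsymbol\ell}$). $\mathcal{L}_gW=L_Wg-\frac2n(\mathrm{div}_gW)g$. CTS-H$^*$ (lapse-scaled mean curvature) method: data $(g,\sigma,\tau^*,\xi,N)$ with $\sigma$ transverse-traceless, $\tau^*$ constant, $N>0$, $\int\xi N\,dV_g=0$. A solution of the CTS-H$^*$ equations is a pair $(\phi,W)$, $\phi>0$ a function and $W$ a vector field, such that $$\bar g=\phi^{q-2}g,\qquad \bar K=\phi^{-2}\Big(\sigma+\tfrac1{2N}\mathcal{L}_gW\Big)+\frac{\tau^*+\phi^{-2q}\xi}{n}\bar g$$ solves the Einstein constraint equations $R_{\bar g}-|\bar K|^2_{\bar g}+(\mathrm{tr}_{\bar g}\bar K)^2=0$, $\mathrm{div}_{\bar g}\bar K=d(\mathrm{tr}_{\bar g}\bar K)$; this $(\bar g,\bar K)$ is the generated solution. *)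

(* Tensor fields on T^n = R^n/Z^n are represented by
   their components in the unit coordinates (s^1,...,s^n) as Z^n-periodic
   functions on R^n = 'rV[R]_n. Coordinate s^1 is the index with value 0. *)
From HB Require Import structures.
From mathcomp Require Import all_boot all_order all_algebra.
From mathcomp Require Import all_classical all_reals all_analysis.
Set Implicit Arguments. Unset Strict Implicit. Unset Printing Implicit Defensive.
Import Order.TTheory GRing.Theory Num.Theory.
Import numFieldNormedType.Exports.
Local Open Scope classical_set_scope.
Local Open Scope ring_scope.

Section TorusGeometry.
Variable R : realType.
Variable n : nat.

Notation pt := 'rV[R]_n.
Definition sfield := pt -> R.
Definition vfield := 'I_n -> pt -> R.
Definition tfield := 'I_n -> 'I_n -> pt -> R.

Definition ebas (i : 'I_n) : pt := delta_mx 0 i.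

Definition pd (i : 'I_n) (f : sfield) : sfield := fun x => 'D_(ebas i) f x.

Definition iter_pd (s : seq 'I_n) (f : sfield) : sfield := foldr pd f s.

Definition smooth (f : sfield) : Prop :=
  forall (s : seq 'I_n) (x : pt), differentiable (iter_pd s f) x.

Definition periodic (f : sfield) : Prop :=
  forall (x : pt) (i : 'I_n), f (x + ebas i) = f x.

Definition torus_fun (f : sfield) : Prop := smooth f /\ periodic f.

Definition dep_s1 (f : sfield) : Prop :=
  forall x y : pt, (forall i : 'I_n, val i = 0%N -> x 0 i = y 0 i) -> f x = f y.

Definition gmat (g : tfield) (x : pt) : 'M[R]_n := \matrix_(i, j) g i j x.
Definition ginv (g : tfield) (i j : 'I_n) (x : pt) : R := invmx (gmat g x) i j.

Definition Gamma (g : tfield) (k i j : 'I_n) : sfield := fun x =>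
  2^-1 * \sum_(l < n) ginv g k l x *
     (pd i (g j l) x + pd j (g i l) x - pd l (g i j) x).

Definition ricci (g : tfield) (i j : 'I_n) : sfield := fun x =>
  \sum_(k < n) (pd k (Gamma g k i j) x - pd j (Gamma g k i k) x
     + \sum_(l < n) (Gamma g k k l x * Gamma g l i j x
                     - Gamma g k j l x * Gamma g l i k x)).

Definition scal (g : tfield) : sfield := fun x =>
  \sum_(i < n) \sum_(j < n) ginv g i j x * ricci g i j x.

Definition trK (g K : tfield) : sfield := fun x =>
  \sum_(i < n) \sum_(j < n) ginv g i j x * K i j x.

Definition normK (g K : tfield) : sfield := fun x =>
  \sum_(i < n) \sum_(j < n) \sum_(a < n) \sum_(b < n)
     ginv g i a x * ginv g j b x * K i j x * K a b x.

Definition covD (g K : tfield) (k i j : 'I_n) : sfield := fun x =>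
  pd k (K i j) x - \sum_(l < n) (Gamma g l k i x * K l j x + Gamma g l k j x * K i l x).

Definition divK (g K : tfield) (j : 'I_n) : sfield := fun x =>
  \sum_(i < n) \sum_(k < n) ginv g i k x * covD g K k i j x.

Definition constraints (g K : tfield) : Prop :=
  forall x : pt,
    scal g x - normK g K x + (trK g K x) ^+ 2 = 0 /\
    forall j : 'I_n, divK g K j x = pd j (trK g K) x.

Definition lieg (W : vfield) (g : tfield) (i j : 'I_n) : sfield := fun x =>
  \sum_(k < n) (W k x * pd k (g i j) x + g k j x * pd i (W k) x
                + g i k x * pd j (W k) x).

Definition divW (g : tfield) (W : vfield) : sfield := fun x =>
  \sum_(k < n) (pd k (W k) x + \sum_(l < n) Gamma g k k l x * W l x).

Definition confKill (g : tfield) (W : vfield) (i j : 'I_n) : sfield := fun x =>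
  lieg W g i j x - 2 / n%:R * divW g W x * g i j x.

Definition qexp : R := 2 * n%:R / (n%:R - 2).
Definition kappa : R := (n%:R - 1) / n%:R.

Definition gen_metric (g : tfield) (phi : sfield) : tfield := fun i j x =>
  (phi x) `^ (qexp - 2) * g i j x.

Definition gen_K (g sigma : tfield) (taus : R) (xi N phi : sfield) (W : vfield)
  : tfield := fun i j x =>
  (phi x) `^ (-2) * (sigma i j x + (2 * N x)^-1 * confKill g W i j x)
  + (taus + (phi x) `^ (- (2 * qexp)) * xi x) / n%:R * gen_metric g phi i j x.

Definition CTS_solution (g sigma : tfield) (taus : R) (xi N : sfield)
  (phi : sfield) (W : vfield) : Prop :=
  torus_fun phi /\ (forall x, 0 < phi x) /\ (forall k, torus_fun (W k)) /\
  constraints (gen_metric g phi) (gen_K g sigma taus xi N phi W).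

Definition gflat (l : 'I_n -> R) : tfield := fun i j _ =>
  if i == j then l i ^+ 2 else 0.

Definition sigma_flat (l : 'I_n -> R) : tfield := fun i j _ =>
  if i == j then (if val i == 0%N then kappa * l i ^+ 2 else - (n%:R^-1) * l i ^+ 2)
  else 0.

(* integral over T^n w.r.t. dV_g = sqrt(det g) ds^1...ds^n, as an iterated
   integral over the unit cube [0,1]^n *)
Definition set_coord (x : pt) (k : 'I_n) (t : R) : pt := x + (t - x 0 k) *: ebas k.

Definition iter_int (s : seq 'I_n) (f : sfield) : sfield :=
  foldr (fun k F => fun x =>
           Rintegral (@lebesgue_measure R) `[0%R, 1%R] (fun t => F (set_coord x k t)))
        f s.

Definition torus_int (g : tfield) (f : sfield) : R :=
  iter_int (enum 'I_n) (fun x => f x * Num.sqrt (\det (gmat g x))) 0.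

End TorusGeometry.

From HB Require Import structures.
From mathcomp Require Import all_boot all_order all_algebra.
From mathcomp Require Import all_classical all_reals all_analysis.
From mathcomp Require Import ring lra.
Set Implicit Arguments. Unset Strict Implicit. Unset Printing Implicit Defensive.
Import Order.TTheory GRing.Theory Num.Theory.
Import numFieldNormedType.Exports.
Local Open Scope classical_set_scope.
Local Open Scope ring_scope.

(* With [phi = c] constant the physical metric is the flat metric [g_(r l)].
   Take [W = w d/ds^1] with [d w/ds^1 = c^-q xi N]; such a periodic [w] exists
   because [xi N] has zero mean.  Then [(2N)^-1 L W = c^-q xi sigma^flat], and
   since [sigma^flat = (delta_1 - 1/n) g] and [mu = tau* c^q] the trace-free and
   trace parts of [K] combine into [tau_bar (r l_1)^2 (ds^1)^2].  For a flat
   metric such a tensor solves the constraints: [|K|^2 = (tr K)^2 = tau_bar^2],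
   and [div K = d tau_bar] because [tau_bar] depends on [s^1] only. *)

Section Smoothness.
Variables (R : realType) (n : nat).
Local Notation pt := 'rV[R]_n.
Implicit Types (f g : pt -> R) (i : 'I_n).

Lemma pd_line_cst i f x :
  (forall t : R, f (x + t *: ebas R i) = f x) -> pd i f x = 0.
Proof.
move=> f_cst; rewrite /pd -(derive_cst (f x) x (ebas R i)) /derive.
suff -> : (fun h : R => h^-1 *: ((f \o shift x) (h *: ebas R i) - f x)) =
  (fun h => h^-1 *: ((cst (f x) \o shift x) (h *: ebas R i) - cst (f x) x)) by [].
by apply/funext => h /=; rewrite (addrC _ x) f_cst.
Qed.

Lemma pd_cst i (a : R) : pd i (fun _ : pt => a) = fun _ => 0.
Proof. by apply/funext => x; apply: pd_line_cst. Qed.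

Lemma pdD i f g : (forall x, differentiable f x) -> (forall x, differentiable g x) ->
  pd i (f \+ g) = pd i f \+ pd i g.
Proof.
move=> df dg; apply/funext => x.
by rewrite /pd (@deriveD _ _ _ f g) //; apply: diff_derivable.
Qed.

Lemma pdM i f g : (forall x, differentiable f x) -> (forall x, differentiable g x) ->
  pd i (f \* g) = (pd i f \* g) \+ (f \* pd i g).
Proof.
move=> df dg; apply/funext => x.
rewrite /pd (@deriveM _ _ f g) //; try exact: diff_derivable.
by rewrite /= /GRing.scale /= addrC mulrC.
Qed.

Lemma pdMl i (a : R) f x : differentiable f x ->
  pd i (fun y => a * f y) x = a * pd i f x.
Proof. by move=> df; rewrite /pd (@deriveZ _ _ _ f) //; exact: diff_derivable. Qed.

Lemma iter_pd_rcons s i f : iter_pd (rcons s i) f = iter_pd s (pd i f).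
Proof. by rewrite /iter_pd foldr_rcons. Qed.

Lemma iter_pd_cst s (a : R) :
  iter_pd s (fun _ : pt => a) = fun _ => if s is [::] then a else 0.
Proof. by elim: s => [//|i s IH] /=; rewrite IH pd_cst. Qed.

Lemma iter_pdD s f g :
  (forall t x, (size t < size s)%N -> differentiable (iter_pd t f) x) ->
  (forall t x, (size t < size s)%N -> differentiable (iter_pd t g) x) ->
  iter_pd s (f \+ g) = iter_pd s f \+ iter_pd s g.
Proof.
elim: s => [//|i s IH] df dg /=.
rewrite IH; last first.
- by move=> t x st; apply: dg; rewrite /= ltnS ltnW.
- by move=> t x st; apply: df; rewrite /= ltnS ltnW.
by apply: pdD => x; [apply: (df s) | apply: (dg s)].
Qed.

Lemma smooth_differentiable f x : smooth f -> differentiable f x.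
Proof. by move=> sf; apply: (sf [::]). Qed.

Lemma smooth_pd i f : smooth f -> smooth (pd i f).
Proof. by move=> sf s x; rewrite -iter_pd_rcons; apply: sf. Qed.

Lemma smooth_from_pd f : (forall x, differentiable f x) ->
  (forall i, smooth (pd i f)) -> smooth f.
Proof.
by move=> df spf s x; case/lastP: s => [|s i] //; rewrite iter_pd_rcons; apply: spf.
Qed.

Lemma smooth_cst (a : R) : smooth (fun _ : pt => a).
Proof. by move=> s x; rewrite iter_pd_cst; exact: differentiable_cst. Qed.

Lemma smoothD f g : smooth f -> smooth g -> smooth (f \+ g).
Proof.
move=> sf sg s x; rewrite iter_pdD; first exact: differentiableD.
- by move=> t y _; apply: sf.
- by move=> t y _; apply: sg.
Qed.

Lemma smoothM f g : smooth f -> smooth g -> smooth (f \* g).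
Proof.
suff: forall k f g, smooth f -> smooth g -> forall s, (size s <= k)%N ->
  forall x, differentiable (iter_pd s (f \* g)) x.
  by move=> H sf sg s; apply: (H (size s)).
elim=> [|k IH] {}f {}g sf sg s.
  rewrite leqn0 size_eq0 => /eqP -> x.
  exact: differentiableM (smooth_differentiable _ sf) (smooth_differentiable _ sg).
case/lastP: s => [|s i] s_le x.
  exact: differentiableM (smooth_differentiable _ sf) (smooth_differentiable _ sg).
move: s_le; rewrite size_rcons ltnS => s_le.
have IH' f' g' : smooth f' -> smooth g' ->
    forall t y, (size t < size s)%N -> differentiable (iter_pd t (f' \* g')) y.
  by move=> sf' sg' t y st; apply: IH => //; apply: leq_trans s_le; apply: ltnW.
rewrite iter_pd_rcons pdM; try by move=> y; apply: smooth_differentiable.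
rewrite iter_pdD; [|exact: IH' (smooth_pd _ sf) sg|exact: IH' sf (smooth_pd _ sg)].
by apply: differentiableD; apply: IH => //; exact: smooth_pd.
Qed.

Lemma torus_fun_cst (a : R) : torus_fun (fun _ : pt => a).
Proof. by split; [exact: smooth_cst | by []]. Qed.

Lemma ebasE (k i : 'I_n) : ebas R k 0 i = (i == k)%:R.
Proof. by rewrite /ebas mxE eqxx /= eq_sym. Qed.

Lemma pd_coord_comp (F : R -> R) k i (x : pt) d :
  is_derive (x 0 i) (1 : R) F d ->
  pd k (fun y : pt => F (y 0 i)) x = if k == i then d else 0.
Proof.
move=> [dF <-]; case: eqP => [->|/eqP ki].
  rewrite /pd /derive.
  suff -> : (fun h : R => h^-1 *: (((fun y : pt => F (y 0 i)) \o shift x)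
                 (h *: ebas R i) - F (x 0 i)))
    = (fun h : R => h^-1 *: ((F \o shift (x 0 i)) (h *: 1) - F (x 0 i))) by [].
  by apply/funext => h /=; rewrite !mxE !eqxx /= mulr1 /GRing.scale /= mulr1.
by apply: pd_line_cst => t; rewrite !mxE /= (eq_sym i k) (negbTE ki) mulr0 addr0.
Qed.

Lemma differentiable_coord_comp (F : R -> R) i (x : pt) d :
  is_derive (x 0 i) (1 : R) F d -> differentiable (fun y : pt => F (y 0 i)) x.
Proof.
move=> [dF _]; apply: (@differentiable_comp _ _ _ _ (fun y : pt => y 0 i) F).
  exact: differentiable_coord.
exact/derivable1_diffP.
Qed.

End Smoothness.

Lemma is_derive_shift (R : realType) (g : R -> R) (x c d : R) :
  is_derive (x + c) 1 g d -> is_derive x 1 (fun y => g (y + c)) d.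
Proof.
move=> [dg <-].
have E : (fun k : R => k^-1 *: (((fun y => g (y + c)) \o shift x) (k *: 1) - g (x + c)))
  = (fun k : R => k^-1 *: ((g \o shift (x + c)) (k *: 1) - g (x + c))).
  by apply/funext => k /=; rewrite addrA.
by apply: DeriveDef; [rewrite /derivable E | rewrite /derive E].
Qed.

Section PeriodicAntiderivative.
Variable R : realType.
Variable h : R -> R.
Hypothesis h_cont : continuous h.
Hypothesis h_periodic : forall t, h (t + 1) = h t.
Hypothesis h_mean0 : (\int[@lebesgue_measure R]_(t in `[0, 1]) h t)%R = 0.
Local Notation mu := (@lebesgue_measure R).

Let H a b := (\int[mu]_(t in `[a, b]) h t)%R.

Let integrable_h a b : mu.-integrable `[a, b] (EFin \o h).
Proof.
apply: continuous_compact_integrable; first exact: segment_compact.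
by apply: continuous_subspaceT => x; apply: h_cont.
Qed.

Let H_split (a x b : R) : a <= x -> x <= b -> H a b = H a x + H x b.
Proof.
move=> ax xb; have := @Rintegral_itvB R h (BLeft a) (BRight b) x (integrable_h a b).
rewrite !bnd_simp => /(_ ax xb) E.
rewrite -[X in _ = _ + X]Rintegral_itv_obnd_cbnd; last first.
  by apply: integrableS (integrable_h x b) => //; apply: subset_itvr; rewrite bnd_simp.
by rewrite /H -E addrC subrK.
Qed.

Let is_derive_H (a t : R) : a < t -> is_derive t 1 (H a) (h t).
Proof.
move=> at_; have [dH H'] := @continuous_FTC1_closed R h a t (t + 1)
  (ltr_pwDr ltr01 (lexx t)) (integrable_h a (t + 1)) at_ (@h_cont t).
by apply: DeriveDef; [exact: dH | rewrite -derive1E; exact: H'].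
Qed.

(* [x |-> H x (x + 1)] has derivative [h (x + 1) - h x = 0]. *)
Let H_period x : H x (x + 1) = 0.
Proof.
rewrite -h_mean0 -[in RHS](add0r 1).
apply: (@is_derive_0_is_cst R (fun x => H x (x + 1))) => y.
have E : \forall z \near y, H (y - 1) (z + 1) - H (y - 1) z = H z (z + 1).
  have : y - 1 < y by rewrite ltrBlDr ltrDl ltr01.
  move=> /lt_nbhsr; apply: filterS => z /ltW yz.
  rewrite (@H_split (y - 1) z (z + 1)) //; first by rewrite addrC addKr.
  by rewrite lerDl ler01.
apply: (near_eq_is_derive E).
rewrite -(subrr (h y)) -{1}h_periodic.
apply: is_deriveB; last by apply: is_derive_H; rewrite ltrBlDr ltrDl ltr01.
by apply: is_derive_shift; apply: is_derive_H; rewrite ltrBlDr -addrA ltrDl addr_gt0.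
Qed.

Let prim t := if 0 <= t then H 0 t else - H t 0.

Let primE (a t : R) : a <= t -> a <= 0 -> prim t = H a t - H a 0.
Proof.
move=> at_ a0; rewrite /prim; case: ifP => t0.
  by rewrite (@H_split a 0 t) // addrC addKr.
by rewrite (@H_split a t 0) ?opprD ?addNKr // ltW // ltNge t0.
Qed.

Lemma periodic_antiderivative : exists F : R -> R,
  (forall t, is_derive t (1 : R) F (h t)) /\ (forall t, F (t + 1) = F t).
Proof.
exists prim; split=> t; set a := Num.min t 0 - 1.
- have at_ : a < t by rewrite /a; have := ge_min t t 0; lra.
  have a0 : a <= 0 by rewrite /a; have := ge_min 0 t 0; lra.
  have E : \forall z \near t, H a z - H a 0 = prim z.
    by apply: filterS (lt_nbhsr at_) => z /ltW az; rewrite (primE az a0).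
  apply: (near_eq_is_derive E); rewrite -(subr0 (h t)).
  by apply: is_deriveB; exact: is_derive_H.
- have at_ : a <= t by rewrite /a; have := ge_min t t 0; lra.
  have a0 : a <= 0 by rewrite /a; have := ge_min 0 t 0; lra.
  have t1 : t <= t + 1 by rewrite lerDl ler01.
  rewrite (primE at_ a0) (primE (le_trans at_ t1) a0).
  by rewrite (@H_split a t (t + 1)) // H_period addr0.
Qed.

End PeriodicAntiderivative.

Section FlatMetric.
Variables (R : realType) (n : nat).
Local Notation pt := 'rV[R]_n.
Variable L : 'I_n -> R.

Lemma gmat_flat x : gmat (gflat L) x = diag_mx (\row_i L i ^+ 2).
Proof. by apply/matrixP => i j; rewrite !mxE /gflat; case: eqP. Qed.

Lemma Gamma_flat : Gamma (gflat L) = fun _ _ _ _ => 0.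
Proof.
apply/funext => k; apply/funext => i; apply/funext => j; apply/funext => x.
by rewrite /Gamma big1 ?mulr0 // => l _; rewrite !pd_cst subr0 addr0 mulr0.
Qed.

Lemma scal_flat x : scal (gflat L) x = 0.
Proof.
rewrite /scal big1 // => i _; rewrite big1 // => j _.
rewrite /ricci Gamma_flat big1 ?mulr0 // => k _.
by rewrite !pd_cst subrr add0r big1 // => l _; rewrite !mulr0 subrr.
Qed.

Variable i0 : 'I_n.

Definition axial_field (w : pt -> R) : vfield R n :=
  fun k => if k == i0 then w else fun _ => 0.

Definition axial_tensor (tb : pt -> R) : tfield R n :=
  fun i j x => if (i == j) && (i == i0) then tb x * L i ^+ 2 else 0.

Lemma confKill_axial (w d : pt -> R) i j x :
  (forall k y, pd k w y = if k == i0 then d y else 0) ->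
  confKill (gflat L) (axial_field w) i j x =
  if i == j then 2 * d x * ((i == i0)%:R - n%:R^-1) * L i ^+ 2 else 0.
Proof.
move=> w'; rewrite /confKill /lieg /divW Gamma_flat /axial_field.
rewrite (big_only1 i0) //=; last first.
  by move=> k /negbTE -> _; rewrite !pd_cst !mulr0 !addr0.
rewrite (big_only1 i0) //=; last first.
  by move=> k /negbTE -> _; rewrite pd_cst add0r big1 // => m _; rewrite mul0r.
rewrite big1 ?addr0; last by move=> m _; rewrite mul0r.
rewrite eqxx !w' eqxx pd_cst mulr0 add0r /gflat (eq_sym i0 j).
case: (eqVneq i j) => [<-|ij].
  by case: eqP => [->|_]; rewrite ?eqxx /= ?mulr0 ?mul0r ?add0r; ring.
rewrite mulr0 subr0; case: (eqVneq i i0) ij => [-> i0j|_ _].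
  by rewrite eq_sym (negbTE i0j) mul0r mulr0 addr0.
by rewrite !mulr0 mul0r addr0.
Qed.

Hypothesis L_neq0 : forall i, L i != 0.

Lemma ginv_flat i j x :
  ginv (gflat L) i j x = if i == j then (L i ^+ 2)^-1 else 0.
Proof.
rewrite /ginv gmat_flat.
have E : diag_mx (\row_i L i ^+ 2) *m diag_mx (\row_i (L i ^+ 2)^-1) = 1%:M.
  by rewrite mulmx_diag; apply/matrixP => a b; rewrite !mxE mulfV ?expf_neq0.
have [U _] := mulmx1_unit E.
have -> : invmx (diag_mx (\row_i L i ^+ 2)) = diag_mx (\row_i (L i ^+ 2)^-1).
  by rewrite -[RHS](mulKmx U) E mulmx1.
by rewrite !mxE; case: eqP.
Qed.

Lemma trK_axial tb x : trK (gflat L) (axial_tensor tb) x = tb x.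
Proof.
rewrite /trK (big_only1 i0) //; last first.
  by move=> i /negbTE ii0 _; rewrite big1 // => j _; rewrite /axial_tensor ii0 andbF mulr0.
rewrite (big_only1 i0) //; last first.
  by move=> j /negbTE ji0 _; rewrite ginv_flat eq_sym ji0 mul0r.
by rewrite ginv_flat /axial_tensor !eqxx mulrC -mulrA mulfV ?mulr1 ?expf_neq0.
Qed.

Lemma normK_axial tb x : normK (gflat L) (axial_tensor tb) x = tb x ^+ 2.
Proof.
have K0 i j : (i == i0) = false \/ (j == i0) = false -> axial_tensor tb i j x = 0.
  rewrite /axial_tensor; case=> ne0; first by rewrite ne0 andbF.
  by case: eqP => // ->; rewrite ne0.
rewrite /normK (big_only1 i0) //; last first.
  move=> i /negbTE ii0 _; rewrite big1 // => j _; rewrite big1 // => a _.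
  by rewrite big1 // => b _; rewrite (K0 i j) ?mulr0 ?mul0r //; left.
rewrite (big_only1 i0) //; last first.
  move=> j /negbTE ji0 _; rewrite big1 // => a _; rewrite big1 // => b _.
  by rewrite (K0 i0 j) ?mulr0 ?mul0r //; right.
rewrite (big_only1 i0) //; last first.
  by move=> a /negbTE ai0 _; rewrite big1 // => b _; rewrite ginv_flat eq_sym ai0 !mul0r.
rewrite (big_only1 i0) //; last first.
  by move=> b /negbTE bi0 _; rewrite (K0 i0 b) ?mulr0 //; right.
by rewrite ginv_flat /axial_tensor !eqxx /=; field; rewrite ?expf_neq0 ?L_neq0.
Qed.

Lemma divK_axial tb j x : (forall y, differentiable tb y) ->
  divK (gflat L) (axial_tensor tb) j x = if j == i0 then pd i0 tb x else 0.
Proof.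
move=> dtb; rewrite /divK /covD Gamma_flat.
have no_Gamma i : \sum_(l < n) (0 * axial_tensor tb l j x + 0 * axial_tensor tb i l x) = 0.
  by rewrite big1 // => l _; rewrite !mul0r addr0.
rewrite (big_only1 i0) //; last first.
  move=> i /negbTE ii0 _; rewrite big1 // => k _.
  by rewrite no_Gamma subr0 /axial_tensor ii0 andbF pd_cst mulr0.
rewrite (big_only1 i0) //; last first.
  by move=> k /negbTE ki0 _; rewrite ginv_flat eq_sym ki0 mul0r.
rewrite no_Gamma subr0 ginv_flat eqxx /axial_tensor eqxx andbT (eq_sym i0 j).
case: ifP => _; last by rewrite pd_cst mulr0.
under eq_fun do rewrite mulrC.
by rewrite pdMl // mulrA mulVf ?mul1r ?expf_neq0.
Qed.

Lemma constraints_axial tb : (forall y, differentiable tb y) ->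
  (forall j x, j != i0 -> pd j tb x = 0) ->
  constraints (gflat L) (axial_tensor tb).
Proof.
move=> dtb tb_axial x; split.
  by rewrite scal_flat normK_axial trK_axial sub0r addNr.
move=> j; rewrite divK_axial //.
have -> : trK (gflat L) (axial_tensor tb) = tb by apply/funext => y; rewrite trK_axial.
by case: (eqVneq j i0) => [->|ji0] //; rewrite tb_axial.
Qed.

End FlatMetric.

Section FirstCoordinate.
Variables (R : realType) (n' : nat).
Local Notation n := n'.+1.
Local Notation pt := 'rV[R]_n.
Local Notation mu := (@lebesgue_measure R).

Lemma dep_s1P (f : pt -> R) : dep_s1 f ->
  forall x y : pt, x 0 ord0 = y 0 ord0 -> f x = f y.
Proof.
by move=> f_s1 x y xy; apply: f_s1 => i i0; rewrite (_ : i = ord0) //; exact: val_inj.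
Qed.

Lemma iter_int_s1 s (F : pt -> R) : (forall k, k \in s -> k != ord0) ->
  (forall x y : pt, x 0 ord0 = y 0 ord0 -> F x = F y) -> iter_int s F = F.
Proof.
move=> s_ne0 F_s1; elim: s s_ne0 => [//|k s IH] s_ne0 /=.
rewrite IH; last by move=> j js; apply: s_ne0; rewrite inE js orbT.
apply/funext => x /=.
have k0 : k != ord0 by apply: s_ne0; rewrite inE eqxx.
rewrite (_ : (fun t => F (set_coord x k t)) = fun=> F x); last first.
  apply/funext => t; apply: F_s1.
  by rewrite /set_coord !mxE /= eq_sym (negbTE k0) mulr0 addr0.
by rewrite Rintegral_cst //= lebesgue_measure_itv /= lte_fin ltr01 /= oppr0 addr0 /= mulr1.
Qed.

Lemma torus_int_s1 (g : tfield R n) (f : pt -> R) :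
  dep_s1 (fun x => f x * Num.sqrt (\det (gmat g x))) ->
  torus_int g f = Rintegral mu `[0, 1]
    (fun t => f (set_coord 0 ord0 t) * Num.sqrt (\det (gmat g (set_coord 0 ord0 t)))).
Proof.
move=> /dep_s1P f_s1; rewrite /torus_int enum_ordSl /= iter_int_s1 //.
by move=> k /mapP [j _ ->]; rewrite eq_sym neq_lift.
Qed.

Lemma s1_potential (l : 'I_n -> R) (f : pt -> R) :
  (forall k, l k != 0) -> torus_fun f -> dep_s1 f -> torus_int (gflat l) f = 0 ->
  exists w : pt -> R, torus_fun w /\
    forall k x, pd k w x = if k == ord0 then f x else 0.
Proof.
move=> l_neq0 [f_smooth f_per] f_s1 f_mean0.
pose D := Num.sqrt (\det (gmat (gflat l) (0 : pt))).
have D_neq0 : D != 0.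
  rewrite gt_eqF // sqrtr_gt0 gmat_flat det_diag; apply: prodr_gt0 => i _.
  by rewrite mxE exprn_even_gt0 //= l_neq0.
pose s1 t : pt := set_coord 0 ord0 t.
have s1E t : s1 t 0 ord0 = t by rewrite /s1 /set_coord !mxE !eqxx /= mulr1 subr0 add0r.
pose h t := f (s1 t) * D.
have h_cont : continuous h.
  move=> t; apply: differentiable_continuous.
  apply: (@differentiable_comp _ _ _ _ s1 (fun x : pt => f x * D)).
    by apply: differentiableD => //; apply: differentiableZl; apply: differentiableB.
  exact: smooth_differentiable (smoothM f_smooth (smooth_cst D)).
have h_per t : h (t + 1) = h t.
  rewrite /h (_ : s1 (t + 1) = s1 t + ebas R ord0) ?f_per //.
  by rewrite /s1 /set_coord !add0r mxE !subr0 scalerDl scale1r.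
have h_mean0 : (\int[mu]_(t in `[0, 1]) h t)%R = 0.
  rewrite -[RHS]f_mean0 torus_int_s1; first reflexivity.
  by move=> x y xy; rewrite (f_s1 x y xy).
have [F [F' F_per]] := periodic_antiderivative h_cont h_per h_mean0.
pose w (x : pt) := D^-1 * F (x 0 ord0).
have w' k x : pd k w x = if k == ord0 then f x else 0.
  rewrite (pd_coord_comp k (is_deriveZ D^-1 (F' (x 0 ord0)))); case: ifP => // _.
  have f_s1x : f (s1 (x 0 ord0)) = f x by apply: (dep_s1P f_s1); exact: s1E.
  by rewrite /h /GRing.scale /= f_s1x mulrCA mulVf ?mulr1.
exists w; split; last exact: w'.
split; last by move=> x i; rewrite /w mxE ebasE; case: eqP; rewrite ?addr0 // F_per.
apply: smooth_from_pd => [x|k].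
  exact: differentiable_coord_comp (is_deriveZ D^-1 (F' _)).
rewrite (_ : pd k w = if k == ord0 then f else fun _ => 0).
  by case: ifP => _; [exact: f_smooth | exact: smooth_cst].
by apply/funext => y; rewrite w'; case: ifP.
Qed.

Lemma pd_dep_s1 (f : pt -> R) j x : dep_s1 f -> j != ord0 -> pd j f x = 0.
Proof.
move=> f_s1 j0; apply: pd_line_cst => t; apply: (dep_s1P f_s1).
by rewrite !mxE /= eq_sym (negbTE j0) mulr0 addr0.
Qed.

Lemma sigma_flatE (l : 'I_n -> R) i j x :
  sigma_flat l i j x = if i == j then ((i == ord0)%:R - n%:R^-1) * l i ^+ 2 else 0.
Proof.
rewrite /sigma_flat /kappa; case: ifP => // _.
rewrite (_ : (i == ord0) = (val i == 0%N)) //.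
case: ifP => _ /=; last by rewrite sub0r mulNr.
by field; rewrite nat1r pnatr_eq0.
Qed.

End FirstCoordinate.

Lemma qexp_gt0 (R : realType) (n : nat) : (2 < n)%N -> 0 < qexp R n.
Proof.
move=> n_gt2; rewrite /qexp divr_gt0 ?mulr_gt0 ?ltr0n ?subr_gt0 ?ltr_nat //.
exact: ltn_trans n_gt2.
Qed.

Lemma qexp_scale_exponent (R : realType) (n : nat) : (2 < n)%N ->
  (qexp R n)^-1 * ((qexp R n - 2) / 2) = n%:R^-1.
Proof.
move=> n_gt2; have n_neq0 : n%:R != 0 :> R by rewrite pnatr_eq0 -lt0n (ltn_trans _ n_gt2).
have n2_neq0 : n%:R - 2 != 0 :> R by rewrite subr_eq0 eqr_nat neq_ltn n_gt2 orbT.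
by rewrite /qexp; field; rewrite n_neq0 n2_neq0.
Qed.

Section ConstantConformalFactor.
Variables (R : realType) (n' : nat).
Local Notation n := n'.+1.
Local Notation pt := 'rV[R]_n.
Variables (l : 'I_n -> R) (mu taus c : R) (xi N : pt -> R).
Hypothesis l_gt0 : forall k, 0 < l k.
Hypotheses (xi_fun : torus_fun xi) (N_fun : torus_fun N) (N_gt0 : forall x, 0 < N x).
Hypotheses (xi_s1 : dep_s1 xi) (N_s1 : dep_s1 N).
Hypothesis xiN_mean0 : torus_int (gflat l) (fun x => xi x * N x) = 0.
Hypothesis c_gt0 : 0 < c.
Hypothesis mu_eq : mu = taus * c `^ qexp R n.
Local Notation q := (qexp R n).
Local Notation r := (c `^ ((q - 2) / 2)).
Local Notation tau_bar := (fun x : pt => taus + c `^ (- (2 * q)) * xi x).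

Lemma conformal_scale_sq : r ^+ 2 = c `^ (q - 2).
Proof. by rewrite -powR_mulrn ?powR_ge0 // -powRrM; congr (_ `^ _); field. Qed.

Lemma gen_metric_const : gen_metric (gflat l) (fun _ => c) = gflat (fun k => r * l k).
Proof.
apply/funext => i; apply/funext => j; apply/funext => x.
rewrite /gen_metric /gflat; case: ifP => _; last by rewrite mulr0.
by rewrite exprMn conformal_scale_sq.
Qed.

Lemma gen_K_const (W : vfield R n) :
  (forall i j x, (2 * N x)^-1 * confKill (gflat l) W i j x
                 = c `^ (- q) * xi x * sigma_flat l i j x) ->
  gen_K (gflat l) (fun i j x => mu * sigma_flat l i j x) taus xi N (fun _ => c) W
  = axial_tensor (fun k => r * l k) ord0 tau_bar.
Proof.
move=> CK; apply/funext => i; apply/funext => j; apply/funext => x.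
have c_neq0 : c != 0 by rewrite gt_eqF.
have c2_neq0 : c `^ (-2) != 0 by rewrite gt_eqF // powR_gt0.
have cq : c `^ q = c `^ (q - 2) / c `^ (-2).
  by rewrite (_ : q - 2 = -2 + q) ?powRD ?c_neq0 ?implybT //; [field | rewrite addrC].
have cNq : c `^ (- q) = c `^ (q - 2) * c `^ (- (2 * q)) / c `^ (-2).
  rewrite -powRD ?c_neq0 ?implybT // (_ : q - 2 + - (2 * q) = -2 + - q); last by ring.
  by rewrite powRD ?c_neq0 ?implybT //; field.
rewrite /gen_K CK gen_metric_const /gflat /axial_tensor sigma_flatE mu_eq cq cNq.
rewrite exprMn conformal_scale_sq.
case: (i == j) => /=; last by rewrite !mulr0 !addr0 mulr0.
by case: (i == ord0); rewrite /= ?mul0r; field; rewrite nat1r pnatr_eq0 c2_neq0.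
Qed.

Lemma cts_const_solution : exists (phi : pt -> R) (W : vfield R n),
  CTS_solution (gflat l) (fun i j x => mu * sigma_flat l i j x) taus xi N phi W /\
  (forall x, phi x = c) /\
  (forall (k : 'I_n) x, val k != 0%N -> W k x = 0) /\
  (forall i j x, (2 * N x)^-1 * confKill (gflat l) W i j x
                 = c `^ (- q) * xi x * sigma_flat l i j x) /\
  (forall i j x, gen_metric (gflat l) phi i j x
                 = gflat (fun k => r * l k) i j x) /\
  (forall i j x,
     gen_K (gflat l) (fun i j x => mu * sigma_flat l i j x) taus xi N phi W i j x
     = if (i == j) && (val i == 0%N) then tau_bar x * (r * l i) ^+ 2 else 0).
Proof.
have xiN_fun : torus_fun (fun x => xi x * N x).
  by split; [exact: smoothM xi_fun.1 N_fun.1 | move=> x i; rewrite xi_fun.2 N_fun.2].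
have xiN_s1 : dep_s1 (fun x => xi x * N x).
  by move=> x y xy; rewrite (xi_s1 xy) (N_s1 xy).
have [w [w_fun w']] := s1_potential (fun k => lt0r_neq0 (l_gt0 k)) xiN_fun xiN_s1 xiN_mean0.
pose W := axial_field ord0 (fun x => c `^ (- q) * w x).
have CK i j x : (2 * N x)^-1 * confKill (gflat l) W i j x
                = c `^ (- q) * xi x * sigma_flat l i j x.
  rewrite (@confKill_axial _ _ _ _ _ (fun x => c `^ (- q) * (xi x * N x))); last first.
    move=> k y; rewrite pdMl ?w'; last exact: smooth_differentiable w_fun.1.
    by case: ifP; rewrite ?mulr0.
  rewrite sigma_flatE; case: ifP => _; last by rewrite !mulr0.
  by field; rewrite nat1r pnatr_eq0 (gt_eqF (N_gt0 x)).
have tau_bar_fun : torus_fun tau_bar.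
  split; last by move=> x i; rewrite xi_fun.2.
  exact: smoothD (smooth_cst _) (smoothM (smooth_cst _) xi_fun.1).
exists (fun _ => c), W; split; last first.
  do !split=> //; last by move=> i j x; rewrite (gen_K_const CK).
    by move=> k x k_neq0; rewrite /W /axial_field ifN.
  by move=> i j x; rewrite gen_metric_const.
split; first exact: torus_fun_cst.
split=> //; split.
  move=> k; rewrite /W /axial_field; case: ifP => _; last exact: torus_fun_cst.
  split; first exact: smoothM (smooth_cst _) w_fun.1.
  by move=> x i; rewrite w_fun.2.
rewrite gen_metric_const (gen_K_const CK); apply: constraints_axial.
- by move=> k; rewrite mulf_neq0 ?gt_eqF ?powR_gt0.
- by move=> y; exact: smooth_differentiable tau_bar_fun.1.
- by move=> j x j_neq0; apply: pd_dep_s1 => // y z yz; rewrite (xi_s1 yz).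
Qed.

End ConstantConformalFactor.

Unset Implicit Arguments.
Local Close Scope classical_set_scope.

Theorem proposition7p1 (R : realType) (n : nat) (l : 'I_n -> R) (mu taus : R)
  (xi N : 'rV[R]_n -> R) :
  (3 <= n)%N ->
  (forall k, 0 < l k) ->
  torus_fun xi -> torus_fun N -> (forall x, 0 < N x) ->
  dep_s1 xi -> dep_s1 N ->
  torus_int (gflat l) (fun x => xi x * N x) = 0 ->
  (* part (1) *)
  (((0 < mu /\ 0 < taus) \/ (mu < 0 /\ taus < 0)) ->
   let c := (mu / taus) `^ (qexp R n)^-1 in
   let r := c `^ ((qexp R n - 2) / 2) in
   r = (mu / taus) `^ (n%:R^-1) /\
   exists (phi : 'rV[R]_n -> R) (W : 'I_n -> 'rV[R]_n -> R),
     CTS_solution (gflat l) (fun i j x => mu * sigma_flat l i j x) taus xi N phi W /\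
     (forall x, phi x = c) /\
     (forall (k : 'I_n) x, val k != 0%N -> W k x = 0) /\
     (forall i j x, (2 * N x)^-1 * confKill (gflat l) W i j x
                    = c `^ (- qexp R n) * xi x * sigma_flat l i j x) /\
     (forall i j x, gen_metric (gflat l) phi i j x
                    = gflat (fun k => r * l k) i j x) /\
     (forall i j x,
        gen_K (gflat l) (fun i j x => mu * sigma_flat l i j x) taus xi N phi W i j x
        = if (i == j) && (val i == 0%N)
          then (taus + c `^ (- (2 * qexp R n)) * xi x) * (r * l i) ^+ 2
          else 0)) /\
  (* part (2) *)
  (mu = 0 -> taus = 0 -> forall c : R, 0 < c ->
   let r := c `^ ((qexp R n - 2) / 2) in
   exists (phi : 'rV[R]_n -> R) (W : 'I_n -> 'rV[R]_n -> R),
     CTS_solution (gflat l) (fun i j x => mu * sigma_flat l i j x) taus xi N phi W /\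
     (forall x, phi x = c) /\
     (forall i j x, (2 * N x)^-1 * confKill (gflat l) W i j x
                    = c `^ (- qexp R n) * xi x * sigma_flat l i j x) /\
     (forall i j x, gen_metric (gflat l) phi i j x
                    = gflat (fun k => r * l k) i j x) /\
     (forall i j x,
        gen_K (gflat l) (fun i j x => mu * sigma_flat l i j x) taus xi N phi W i j x
        = if (i == j) && (val i == 0%N)
          then (c `^ (- (2 * qexp R n)) * xi x) * (r * l i) ^+ 2
          else 0)).
Proof.
case: n l xi N => [//|n'] l xi N n_ge3 l_gt0 xi_fun N_fun N_gt0 xi_s1 N_s1 xiN_mean0.
have q_neq0 : qexp R n'.+1 != 0 by rewrite gt_eqF // qexp_gt0.
split.
- move=> same_sign c r.
  have ratio_gt0 : 0 < mu / taus.
    case: same_sign => -[mu0 taus0]; first exact: divr_gt0.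
    by rewrite -divrNN divr_gt0 ?oppr_gt0.
  have taus_neq0 : taus != 0.
    by case: same_sign => -[_ taus0]; [rewrite gt_eqF | rewrite lt_eqF].
  have mu_eq : mu = taus * c `^ qexp R n'.+1.
    by rewrite /c -powRrM mulVf // powRr1 ?ltW // mulrC divfK.
  split; first by rewrite /r /c -powRrM qexp_scale_exponent.
  exact: cts_const_solution l_gt0 xi_fun N_fun N_gt0 xi_s1 N_s1 xiN_mean0
    (powR_gt0 _ ratio_gt0) mu_eq.
- move=> -> -> c c_gt0 r.
  have [phi [W [sol [phiE [_ [CK [gm gK]]]]]]] := cts_const_solution l_gt0 xi_fun
    N_fun N_gt0 xi_s1 N_s1 xiN_mean0 c_gt0 (esym (mul0r _)).
  by exists phi, W; do !split=> //; move=> i j x; rewrite gK add0r.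
Qed.
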